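(* For $p\ge2$, $\dfrac{1+z_p}{2}\ge\dfrac{p}{p+2}$, equivalently $\dfrac{1+z_p}{1-z_p}\ge\dfrac p2$.
   Context: For $p=\alpha(\alpha+1)$, $\alpha>0$, $L_\alpha$ is the solution on $(-1,1)$ of $(1-s^2)y''-2sy'+py=0$ bounded near $1$ with $L_\alpha(1)=1$, and $z_p$ is its largest zero in $(-1,1)$ (for $p=2$, $L_1(s)=s$, $z_2=0$). *)

From Stdlib Require Import Reals Lra.
Open Scope R_scope.

Definition legendre_ode (p : R) (L : R -> R) : Prop :=
  exists L1 L2 : R -> R,
    forall s, -1 < s < 1 ->
      derivable_pt_lim L s (L1 s) /\
      derivable_pt_lim L1 s (L2 s) /\
      (1 - s^2) * L2 s - 2 * s * L1 s + p * L s = 0.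

Definition bounded_near_1 (L : R -> R) : Prop :=
  exists M d, 0 < d /\ forall s, 1 - d < s < 1 -> Rabs (L s) <= M.

(* L(1) = 1, understood as the (left) limit at 1 of the solution on (-1,1). *)
Definition value_1_at_1 (L : R -> R) : Prop :=
  forall eps, 0 < eps -> exists d, 0 < d /\
    forall s, 1 - d < s < 1 -> Rabs (L s - 1) < eps.

Definition is_L_alpha (alpha : R) (L : R -> R) : Prop :=
  legendre_ode (alpha * (alpha + 1)) L /\ bounded_near_1 L /\ value_1_at_1 L.

Definition largest_zero (L : R -> R) (z : R) : Prop :=
  -1 < z < 1 /\ L z = 0 /\ forall s, z < s < 1 -> L s <> 0.

From Stdlib Require Import Reals Lra Psatz Ranalysis5.
Open Scope R_scope.

(* Sturm comparison on (z, 1).  If (p + 2) z < p - 2, an explicit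
   u(s) = (s - z)(a s + b), positive on (z, 1), satisfies
   (1 - s^2) u'' - 2 s u' + p u > 0 there.  The Wronskian
   W = (1 - s^2)(L' u - L u') vanishes at z and has derivative
   -L ((1 - s^2) u'' - 2 s u' + p u) < 0, so it stays below some -d < 0 near 1.
   As L -> 1 and u, u' are bounded, this forces L' <= -c / (1 - s), hence
   L(s) <= C + c ln (1 - s) -> -oo, contradicting L > 0 on (z, 1). *)

Definition legendre_form (p y y1 y2 s : R) : R :=
  (1 - s^2) * y2 - 2 * s * y1 + p * y.

Lemma derivable_pt_lim_eq f x l l' :
  derivable_pt_lim f x l -> l = l' -> derivable_pt_lim f x l'.
Proof. now intros H <-. Qed.

Lemma derivable_pt_lim_1_minus_sq s :
  derivable_pt_lim (fun s => 1 - s^2) s (- 2 * s).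
Proof.
  apply derivable_pt_lim_eq with (0 - INR 2 * s ^ Init.Nat.pred 2).
  - apply (derivable_pt_lim_minus (fun _ => 1) (fun s => s^2)).
    + apply derivable_pt_lim_const.
    + apply derivable_pt_lim_pow.
  - simpl; ring.
Qed.

Lemma derivable_pt_lim_ln_1_minus s :
  s < 1 -> derivable_pt_lim (fun s => ln (1 - s)) s (- / (1 - s)).
Proof.
  intro Hs.
  apply derivable_pt_lim_eq with (/ (1 - s) * (0 - 1)).
  - apply (derivable_pt_lim_comp (fun s => 1 - s) ln).
    + apply (derivable_pt_lim_minus (fun _ => 1) (fun s => s)).
      * apply derivable_pt_lim_const.
      * apply derivable_pt_lim_id.
    + apply derivable_pt_lim_ln; lra.
  - ring.
Qed.

Lemma derivable_pt_lim_affine a b s :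
  derivable_pt_lim (fun s => a * s + b) s a.
Proof.
  apply derivable_pt_lim_eq with (a * 1 + 0).
  - apply (derivable_pt_lim_plus (fun s => a * s) (fun _ => b)).
    + apply (derivable_pt_lim_scal (fun s => s)), derivable_pt_lim_id.
    + apply derivable_pt_lim_const.
  - ring.
Qed.

Lemma derivable_pt_lim_root_times_affine z a b s :
  derivable_pt_lim (fun s => (s - z) * (a * s + b)) s (2 * a * s + (b - a * z)).
Proof.
  apply derivable_pt_lim_eq with (1 * (a * s + b) + (s - z) * a).
  - apply (derivable_pt_lim_mult (fun s => s - z) (fun s => a * s + b)).
    + apply derivable_pt_lim_eq with (1 - 0).
      * apply (derivable_pt_lim_minus (fun s => s) (fun _ => z)).
        -- apply derivable_pt_lim_id.
        -- apply derivable_pt_lim_const.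
      * ring.
    + apply derivable_pt_lim_affine.
  - ring.
Qed.

Lemma pos_of_no_zero_near_1 (f : R -> R) z :
  (forall s, z < s < 1 -> continuity_pt f s) ->
  (forall s, z < s < 1 -> f s <> 0) ->
  value_1_at_1 f ->
  forall s, z < s < 1 -> 0 < f s.
Proof.
  intros f_cont f_nz f_1 s Hs.
  destruct (f_1 (1/2) ltac:(lra)) as (d & d_pos & near_1).
  set (t := Rmax s (1 - d / 2)).
  assert (s_le_t : s <= t) by apply Rmax_l.
  assert (t_near : 1 - d / 2 <= t) by apply Rmax_r.
  assert (t_lt_1 : t < 1) by (apply Rmax_lub_lt; lra).
  assert (ft_pos : 0 < f t).
  { specialize (near_1 t ltac:(lra)). apply Rabs_def2 in near_1. lra. }
  destruct (Rtotal_order 0 (f s)) as [H | [H | H]]; [exact H | now elim (f_nz s) |].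
  exfalso.
  destruct (Rle_lt_or_eq_dec s t s_le_t) as [s_lt_t | <-]; [| lra].
  destruct (IVT_interv f s t) as (r & r_in & fr); [| easy | lra | lra |].
  - intros x Hx. apply f_cont. lra.
  - apply (f_nz r); [lra | exact fr].
Qed.

Lemma unbounded_below_of_deriv_le (f f1 : R -> R) a c :
  a < 1 -> 0 < c ->
  (forall s, a <= s < 1 -> derivable_pt_lim f s (f1 s)) ->
  (forall s, a <= s < 1 -> f1 s <= - c / (1 - s)) ->
  forall M, exists t, a < t < 1 /\ f t < M.
Proof.
  intros a_lt_1 c_pos f_deriv f1_le M.
  set (g := fun s => f s - c * ln (1 - s)).
  assert (g_noninc : forall t, a < t < 1 -> g t <= g a).
  { intros t Ht.
    destruct (MVT_cor2 g (fun s => f1 s - c * - / (1 - s)) a t) as (x & Hx & x_in);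
      [lra | |].
    - intros x Hx.
      apply (derivable_pt_lim_minus f (fun s => c * ln (1 - s))).
      + apply f_deriv; lra.
      + apply (derivable_pt_lim_scal (fun s => ln (1 - s))),
          derivable_pt_lim_ln_1_minus; lra.
    - assert (f1 x <= - c / (1 - x)) by (apply f1_le; lra).
      assert (f1 x - c * - / (1 - x) <= 0) by (unfold Rdiv in *; lra).
      nra. }
  set (K := (Rabs (f a - M) + c) / c).
  assert (cK : c * K = Rabs (f a - M) + c) by (unfold K; field; lra).
  assert (eK : 0 < exp (- K) < 1).
  { split; [apply exp_pos |].
    rewrite <- exp_0. apply exp_increasing.
    assert (0 < K) by (apply Rdiv_lt_0_compat; [pose proof (Rabs_pos (f a - M)) |]; lra).
    lra. }
  exists (1 - exp (- K) * (1 - a)).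
  assert (t_in : a < 1 - exp (- K) * (1 - a) < 1) by (split; nra).
  split; [exact t_in |].
  assert (ln_t : ln (1 - (1 - exp (- K) * (1 - a))) = - K + ln (1 - a)).
  { replace (1 - (1 - exp (- K) * (1 - a))) with (exp (- K) * (1 - a)) by ring.
    rewrite ln_mult, ln_exp; lra. }
  specialize (g_noninc _ t_in). unfold g in g_noninc.
  rewrite ln_t in g_noninc.
  pose proof (RRle_abs (f a - M)).
  nra.
Qed.

Lemma deriv_le_of_wronskian_le s l l1 y y1 d K U :
  -1 < s < 1 -> 0 < d -> 0 < l < 3/2 -> Rabs y1 <= K -> 0 < y <= U ->
  8 * (K + 1) * (1 - s) <= d ->
  (1 - s^2) * (l1 * y - l * y1) <= - d ->
  l1 <= - (d / (4 * U)) / (1 - s).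
Proof.
  intros s_in d_pos l_in y1_le y_in s_near W_le.
  assert (sq_le : 0 < 1 - s^2 <= 2 * (1 - s)) by (split; nra).
  assert (y1_le' : y1 <= K) by (pose proof (RRle_abs y1); lra).
  assert (K_nonneg : 0 <= K) by (pose proof (Rabs_pos y1); lra).
  assert (small : (1 - s^2) * (l * y1) <= 3 * K * (1 - s)).
  { assert (l * y1 <= l * K) by (apply Rmult_le_compat_l; lra).
    assert (l * y1 <= 3/2 * K) by nra. nra. }
  assert (main : (1 - s^2) * y * l1 < - d / 2) by nra.
  assert (l1_neg : l1 < 0).
  { destruct (Rlt_or_le l1 0) as [| H]; [easy |].
    assert (0 <= (1 - s^2) * y * l1) by (apply Rmult_le_pos; nra). lra. }
  assert (2 * (1 - s) * U * l1 <= (1 - s^2) * y * l1).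
  { assert ((1 - s^2) * y <= 2 * (1 - s) * U) by nra. nra. }
  apply (Rmult_le_reg_r (1 - s)); [lra |].
  replace (- (d / (4 * U)) / (1 - s) * (1 - s)) with (- (d / (4 * U))) by (field; lra).
  apply (Rmult_le_reg_l (4 * U)); [lra |].
  field_simplify; [nra | lra].
Qed.

Section Comparison.

Variables (p z K U : R) (L L1 L2 u u1 u2 : R -> R).

Hypothesis legendre_L : forall s, -1 < s < 1 ->
  derivable_pt_lim L s (L1 s) /\ derivable_pt_lim L1 s (L2 s) /\
  legendre_form p (L s) (L1 s) (L2 s) s = 0.
Hypothesis z_in : -1 < z < 1.
Hypothesis L_z : L z = 0.
Hypothesis L_pos : forall s, z < s < 1 -> 0 < L s.
Hypothesis L_1 : value_1_at_1 L.
Hypothesis deriv_u : forall s, -1 < s < 1 -> derivable_pt_lim u s (u1 s).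
Hypothesis deriv_u1 : forall s, -1 < s < 1 -> derivable_pt_lim u1 s (u2 s).
Hypothesis u_z : u z = 0.
Hypothesis u_pos : forall s, z < s < 1 -> 0 < u s.
Hypothesis u_subsolution : forall s, z < s < 1 ->
  0 < legendre_form p (u s) (u1 s) (u2 s) s.
Hypothesis u_bounded : forall s, z < s < 1 -> Rabs (u1 s) <= K /\ u s <= U.

Let wronskian s := (1 - s^2) * (L1 s * u s - L s * u1 s).

Lemma derivable_pt_lim_wronskian s : -1 < s < 1 ->
  derivable_pt_lim wronskian s (- L s * legendre_form p (u s) (u1 s) (u2 s) s).
Proof.
  intro Hs. destruct (legendre_L s Hs) as (dL & dL1 & ode).
  unfold legendre_form in *.
  eapply derivable_pt_lim_eq.
  - apply (derivable_pt_lim_mult (fun s => 1 - s^2) (fun s => L1 s * u s - L s * u1 s)).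
    + apply derivable_pt_lim_1_minus_sq.
    + apply (derivable_pt_lim_minus (fun s => L1 s * u s) (fun s => L s * u1 s)).
      * apply (derivable_pt_lim_mult L1 u); [apply dL1 | apply deriv_u, Hs].
      * apply (derivable_pt_lim_mult L u1); [apply dL | apply deriv_u1, Hs].
  - transitivity (- 2 * s * (L1 s * u s - L s * u1 s)
      + (u s * ((1 - s^2) * L2 s) - (1 - s^2) * L s * u2 s)); [ring |].
    replace ((1 - s^2) * L2 s) with (2 * s * L1 s - p * L s) by lra.
    ring.
Qed.

Lemma wronskian_decreasing a b : z <= a -> a < b -> b < 1 -> wronskian b < wronskian a.
Proof.
  intros za ab b1.
  destruct (MVT_cor2 wronskian
              (fun s => - L s * legendre_form p (u s) (u1 s) (u2 s) s) a b ab)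
    as (c & mvt & c_in).
  - intros c Hc. apply derivable_pt_lim_wronskian. lra.
  - assert (0 < L c * legendre_form p (u c) (u1 c) (u2 c) c * (b - a)).
    { apply Rmult_lt_0_compat; [apply Rmult_lt_0_compat |]; try lra.
      - apply L_pos; lra.
      - apply u_subsolution; lra. }
    nra.
Qed.

Lemma wronskian_eventually_le : exists d, 0 < d /\
  forall s, (z + 1) / 2 <= s < 1 -> wronskian s <= - d.
Proof.
  exists (- wronskian ((z + 1) / 2)).
  assert (W_z : wronskian z = 0) by (unfold wronskian; rewrite L_z, u_z; ring).
  assert (wronskian ((z + 1) / 2) < wronskian z) by (apply wronskian_decreasing; lra).
  split; [lra |].
  intros s Hs.
  destruct (Rle_lt_or_eq_dec _ _ (proj1 Hs)) as [s_gt | <-]; [| lra].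
  assert (wronskian s < wronskian ((z + 1) / 2)) by (apply wronskian_decreasing; lra).
  lra.
Qed.

Lemma deriv_L_eventually_le : exists c a, 0 < c /\ z < a < 1 /\
  forall s, a <= s < 1 -> L1 s <= - c / (1 - s).
Proof.
  destruct wronskian_eventually_le as (d & d_pos & W_le).
  destruct (L_1 (1/2) ltac:(lra)) as (e & e_pos & L_near_1).
  set (mid := (z + 1) / 2).
  destruct (u_bounded mid ltac:(unfold mid; lra)) as (u1_mid & u_mid).
  pose proof (Rabs_pos (u1 mid)).
  assert (U_pos : 0 < U) by (pose proof (u_pos mid ltac:(unfold mid; lra)); lra).
  set (r := Rmin (e / 2) (d / (8 * (K + 1)))).
  assert (r_pos : 0 < r).
  { apply Rmin_glb_lt; apply Rdiv_lt_0_compat; lra. }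
  assert (r_le : r <= e / 2 /\ r <= d / (8 * (K + 1)))
    by (split; [apply Rmin_l | apply Rmin_r]).
  exists (d / (4 * U)), (Rmax mid (1 - r)).
  assert (a_ge : mid <= Rmax mid (1 - r) /\ 1 - r <= Rmax mid (1 - r))
    by (split; [apply Rmax_l | apply Rmax_r]).
  split; [apply Rdiv_lt_0_compat; lra |].
  split; [split; [unfold mid in *; lra | apply Rmax_lub_lt; unfold mid; lra] |].
  intros s Hs.
  assert (s_in : z < s < 1) by (unfold mid in *; lra).
  destruct (u_bounded s s_in) as (u1_le & u_le).
  apply (deriv_le_of_wronskian_le s (L s) (L1 s) (u s) (u1 s) d K U); try easy.
  - lra.
  - split; [now apply L_pos |].
    specialize (L_near_1 s ltac:(lra)). apply Rabs_def2 in L_near_1. lra.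
  - split; [now apply u_pos | easy].
  - assert (s_near : 1 - s <= d / (8 * (K + 1))) by lra.
    apply (Rmult_le_compat_l (8 * (K + 1))) in s_near; [| lra].
    replace (8 * (K + 1) * (d / (8 * (K + 1)))) with d in s_near by (field; lra).
    lra.
  - apply W_le. unfold mid in *; lra.
Qed.

Theorem legendre_comparison : False.
Proof.
  destruct deriv_L_eventually_le as (c & a & c_pos & a_in & L1_le).
  destruct (unbounded_below_of_deriv_le L L1 a c (proj2 a_in) c_pos) with (M := 0)
    as (t & t_in & Lt_neg).
  - intros s Hs. apply legendre_L. lra.
  - exact L1_le.
  - pose proof (L_pos t ltac:(lra)). lra.
Qed.

End Comparison.

Definition root_product_subsolution (p z a b : R) : Prop :=
  forall s, z < s < 1 -> 0 < a * s + b /\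
    0 < legendre_form p ((s - z) * (a * s + b)) (2 * a * s + (b - a * z)) (2 * a) s.

Lemma no_root_product_subsolution p z a b (L L1 L2 : R -> R) :
  (forall s, -1 < s < 1 ->
     derivable_pt_lim L s (L1 s) /\ derivable_pt_lim L1 s (L2 s) /\
     legendre_form p (L s) (L1 s) (L2 s) s = 0) ->
  -1 < z < 1 -> L z = 0 -> (forall s, z < s < 1 -> 0 < L s) -> value_1_at_1 L ->
  ~ root_product_subsolution p z a b.
Proof.
  intros legendre_L z_in L_z L_pos L_1 sub.
  apply (legendre_comparison p z (3 * Rabs a + Rabs b) (2 * (Rabs a + Rabs b))
           L L1 L2 (fun s => (s - z) * (a * s + b)) (fun s => 2 * a * s + (b - a * z))
           (fun _ => 2 * a)); try easy.
  - intros s _. apply derivable_pt_lim_root_times_affine.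
  - intros s _. apply derivable_pt_lim_affine.
  - simpl; ring.
  - intros s Hs. destruct (sub s Hs). apply Rmult_lt_0_compat; lra.
  - intros s Hs. apply sub, Hs.
  - intros s Hs. split.
    + split_Rabs; nra.
    + pose proof (RRle_abs ((s - z) * (a * s + b))).
      assert (Rabs ((s - z) * (a * s + b)) <= 2 * (Rabs a + Rabs b))
        by (rewrite Rabs_mult; split_Rabs; nra).
      lra.
Qed.

Lemma root_product_subsolution_neg_zero p z :
  2 <= p -> z < 0 -> root_product_subsolution p z 0 1.
Proof. intros p_ge z_neg s Hs. unfold legendre_form. split; nra. Qed.

Lemma root_product_subsolution_small_p p z :
  p <= 6 -> 0 <= z -> (p + 2) * z < p - 2 -> root_product_subsolution p z (p - 2) (6 - p).
Proof.
  intros p_le z_nonneg z_small s Hs.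
  assert (p_gt : 2 < p) by nra.
  split; [nra |].
  (* a nonnegative combination of (s - z)(1 - s), 1 - s and s - z *)
  assert (w1 : 0 < 2 * (p - 2) - 2 * (6 - p) * z - 4 * (p - 2) * z^2) by nra.
  assert (w2 : 0 < 2 * (p - 2) - 2 * (p + 2) * z) by nra.
  replace (legendre_form p ((s - z) * ((p - 2) * s + (6 - p)))
             (2 * (p - 2) * s + (6 - p - (p - 2) * z)) (2 * (p - 2)) s)
    with ((p - 2) * (6 - p) * (s - z) * (1 - s)
          + ((1 - s) * (2 * (p - 2) - 2 * (6 - p) * z - 4 * (p - 2) * z^2)
             + (s - z) * (2 * (p - 2) - 2 * (p + 2) * z)) / (1 - z))
    by (unfold legendre_form; field; lra).
  assert (0 <= (p - 2) * (6 - p) * (s - z) * (1 - s)).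
  { repeat apply Rmult_le_pos; lra. }
  assert (0 < ((1 - s) * (2 * (p - 2) - 2 * (6 - p) * z - 4 * (p - 2) * z^2)
               + (s - z) * (2 * (p - 2) - 2 * (p + 2) * z)) / (1 - z)).
  { apply Rdiv_lt_0_compat; nra. }
  lra.
Qed.

Lemma root_product_subsolution_large_p p z :
  6 < p -> 0 <= z -> (p + 2) * z < p - 2 ->
  root_product_subsolution p z (p - 2) ((10 - p) * z).
Proof.
  intros p_gt z_nonneg z_small s Hs.
  split.
  - destruct (Rle_lt_dec p 10); [nra |].
    assert ((p - 10) * z <= (p - 10) * s) by nra. nra.
  - assert (z_sq : (p + 6) * z^2 < p - 2).
    { assert (0 <= (p + 2) * z) by nra.
      assert (((p + 2) * z)^2 < (p - 2)^2) by nra.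
      nra. }
    replace (legendre_form p ((s - z) * ((p - 2) * s + (10 - p) * z))
               (2 * (p - 2) * s + ((10 - p) * z - (p - 2) * z)) (2 * (p - 2)) s)
      with ((p - 2) * (p - 6) * (s - z)^2 + 2 * ((p - 2) - (p + 6) * z^2))
      by (unfold legendre_form; ring).
    assert (0 <= (p - 2) * (p - 6) * (s - z)^2).
    { apply Rmult_le_pos; [apply Rmult_le_pos; lra | apply pow2_ge_0]. }
    lra.
Qed.

Lemma exists_root_product_subsolution p z :
  2 <= p -> (p + 2) * z < p - 2 -> exists a b, root_product_subsolution p z a b.
Proof.
  intros p_ge z_small.
  destruct (Rlt_le_dec z 0) as [z_neg | z_nonneg].
  - exists 0, 1. now apply root_product_subsolution_neg_zero.
  - destruct (Rle_lt_dec p 6) as [p_le | p_gt].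
    + exists (p - 2), (6 - p). now apply root_product_subsolution_small_p.
    + exists (p - 2), ((10 - p) * z). now apply root_product_subsolution_large_p.
Qed.

Theorem lemma5p6 (alpha : R) (L : R -> R) (z : R) :
  0 < alpha ->
  2 <= alpha * (alpha + 1) ->
  is_L_alpha alpha L ->
  largest_zero L z ->
  (1 + z) / 2 >= (alpha * (alpha + 1)) / (alpha * (alpha + 1) + 2).
Proof.
  intros _ p_ge [[L1 [L2 legendre_L]] [_ L_1]] [z_in [L_z L_nz]].
  set (p := alpha * (alpha + 1)) in *.
  assert (L_pos : forall s, z < s < 1 -> 0 < L s).
  { apply pos_of_no_zero_near_1; [| exact L_nz | exact L_1].
    intros s Hs. apply derivable_continuous_pt.
    exists (L1 s). apply legendre_L. lra. }
  apply Rle_ge, Rnot_lt_le. intro z_lt.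
  assert (z_small : (p + 2) * z < p - 2).
  { apply (Rmult_lt_compat_r (2 * (p + 2))) in z_lt; [| lra].
    replace (p / (p + 2) * (2 * (p + 2))) with (2 * p) in z_lt by (field; lra).
    lra. }
  destruct (exists_root_product_subsolution p z p_ge z_small) as (a & b & sub).
  exact (no_root_product_subsolution p z a b L L1 L2 legendre_L z_in L_z L_pos L_1 sub).
Qed.
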